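(* Fix $x>0$, $t>0$, and $v\in(0,1]$, and let $a(y)=1-ve^{-y}$ for $y\in\mathbb{R}$. Then the function $y\mapsto a(x-y)\exp(-vte^{-y})$ is unimodal on $\mathbb{R}$ with maximum at $$y^*=\log\left(-vt+\sqrt{v^2t^2+4te^{x}}\right)-\log 2.$$ Moreover, for any fixed $A>0$, the function $y\mapsto a(y)[1+A\,a(x-y)]$ is unimodal on $\mathbb{R}$ with maximum at $y^*=[x+\log(1+A^{-1})]/2$. *)

From Stdlib Require Import Reals.
Open Scope R_scope.

Definition a_fun (v y : R) : R := 1 - v * exp (- y).

Definition unimodal_at (f : R -> R) (c : R) : Prop :=
  (forall y1 y2, y1 < y2 -> y2 <= c -> f y1 < f y2) /\
  (forall y1 y2, c <= y1 -> y1 < y2 -> f y2 < f y1).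

(* Both functions are differentiable, and after the substitution u = e^y their
   derivatives factor as (positive weight) * (P (e^c) - P (e^y)) with P strictly
   increasing on (0, +oo): P u = u^2 + v t u for the first function and
   P u = A u^2 for the second.  Hence the derivative has the sign of c - y and
   the mean value theorem gives unimodality.  The peak of the first function is
   the positive root of u^2 + v t u = t e^x; that of the second solves
   A e^(2y) = (1 + A) e^x. *)
From Stdlib Require Import Reals Lra.
From Coquelicot Require Import Coquelicot.
Open Scope R_scope.

Lemma unimodal_at_deriv (f f' : R -> R) (c : R) :
  (forall y, derivable_pt_lim f y (f' y)) ->
  (forall y, y < c -> 0 < f' y) -> (forall y, c < y -> f' y < 0) ->
  unimodal_at f c.
Proof.
  intros Hf Hinc Hdec; split.
  - intros y1 y2 H12 Hc.
    destruct (MVT_cor2 f f' y1 y2 H12 (fun z _ => Hf z)) as [z [Heq Hz]].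
    assert (0 < f' z * (y2 - y1)) by (apply Rmult_lt_0_compat; [apply Hinc|]; lra).
    lra.
  - intros y1 y2 Hc H12.
    destruct (MVT_cor2 f f' y1 y2 H12 (fun z _ => Hf z)) as [z [Heq Hz]].
    assert (0 < - f' z * (y2 - y1)).
    { apply Rmult_lt_0_compat; [|lra].
      assert (f' z < 0) by (apply Hdec; lra). lra. }
    lra.
Qed.

Lemma unimodal_at_deriv_factor (f w P : R -> R) (c : R) :
  (forall y, derivable_pt_lim f y (w y * (P (exp c) - P (exp y)))) ->
  (forall y, 0 < w y) ->
  (forall u1 u2, 0 < u1 -> u1 < u2 -> P u1 < P u2) ->
  unimodal_at f c.
Proof.
  intros Hf Hw HP; apply (unimodal_at_deriv f _ c Hf); intros y Hy.
  - apply Rmult_lt_0_compat; [apply Hw|].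
    assert (P (exp y) < P (exp c)) by (apply HP; [apply exp_pos|apply exp_increasing; lra]).
    lra.
  - assert (P (exp c) < P (exp y)) by (apply HP; [apply exp_pos|apply exp_increasing; lra]).
    assert (0 < w y * (P (exp y) - P (exp c))) by (apply Rmult_lt_0_compat; [apply Hw|lra]).
    lra.
Qed.

Lemma exp_opp_add_opp (x y : R) : exp (- (x + - y)) = exp y / exp x.
Proof.
  rewrite Ropp_plus_distr, Ropp_involutive, Rplus_comm, exp_plus, exp_Ropp.
  reflexivity.
Qed.

Lemma quadratic_pos_root (b k : R) : 0 < k ->
  let u := (- b + sqrt (b ^ 2 + 4 * k)) / 2 in 0 < u /\ u ^ 2 + b * u = k.
Proof.
  intros Hk u.
  set (s := sqrt (b ^ 2 + 4 * k)) in u.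
  assert (Hs2 : s * s = b ^ 2 + 4 * k) by (apply sqrt_sqrt; nra).
  assert (0 <= s) by apply sqrt_pos.
  split; unfold u; nra.
Qed.

Lemma derivable_pt_lim_first (x t v y : R) :
  derivable_pt_lim (fun y => a_fun v (x - y) * exp (- (v * t * exp (- y)))) y
    (v * exp (- (v * t * exp (- y))) / (exp x * exp y) *
       (t * exp x - (exp y ^ 2 + v * t * exp y))).
Proof.
  apply is_derive_Reals; unfold a_fun; auto_derive; [exact I|].
  rewrite exp_opp_add_opp, (exp_Ropp y).
  pose proof (exp_pos x); pose proof (exp_pos y).
  field; lra.
Qed.

Lemma derivable_pt_lim_second (x v A y : R) :
  derivable_pt_lim (fun y => a_fun v y * (1 + A * a_fun v (x - y))) y
    (v / (exp x * exp y) * ((1 + A) * exp x - A * exp y ^ 2)).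
Proof.
  apply is_derive_Reals; unfold a_fun; auto_derive; [exact I|].
  rewrite exp_opp_add_opp, exp_Ropp.
  pose proof (exp_pos x); pose proof (exp_pos y).
  field; lra.
Qed.

Theorem lemma1 (x t v : R) (hx : 0 < x) (ht : 0 < t) (hv0 : 0 < v) (hv1 : v <= 1) :
  unimodal_at (fun y => a_fun v (x - y) * exp (- (v * t * exp (- y))))
    (ln (- (v * t) + sqrt (v ^ 2 * t ^ 2 + 4 * t * exp x)) - ln 2) /\
  (forall A : R, 0 < A ->
     unimodal_at (fun y => a_fun v y * (1 + A * a_fun v (x - y)))
       ((x + ln (1 + / A)) / 2)).
Proof.
  pose proof (exp_pos x) as Hex.
  split.
  - destruct (quadratic_pos_root (v * t) (t * exp x)) as [Hu Hroot]; [nra|].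
    replace (v ^ 2 * t ^ 2 + 4 * t * exp x) with ((v * t) ^ 2 + 4 * (t * exp x)) by ring.
    set (c := ln _ - ln 2).
    assert (Hc : exp c = (- (v * t) + sqrt ((v * t) ^ 2 + 4 * (t * exp x))) / 2).
    { unfold c, Rminus; rewrite exp_plus, exp_Ropp, !exp_ln; lra. }
    apply (unimodal_at_deriv_factor _
      (fun y => v * exp (- (v * t * exp (- y))) / (exp x * exp y))
      (fun u => u ^ 2 + v * t * u)).
    + intro y; rewrite Hc, Hroot; apply derivable_pt_lim_first.
    + intro y; pose proof (exp_pos y); pose proof (exp_pos (- (v * t * exp (- y)))).
      apply Rdiv_lt_0_compat; nra.
    + intros u1 u2 H1 H12; assert (0 < v * t) by nra; nra.
  - intros A HA.
    assert (Hc : A * exp ((x + ln (1 + / A)) / 2) ^ 2 = (1 + A) * exp x).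
    { pose proof (Rinv_0_lt_compat A HA).
      set (c := (x + ln (1 + / A)) / 2).
      replace (exp c ^ 2) with (exp (c + c)) by (rewrite exp_plus; ring).
      replace (c + c) with (x + ln (1 + / A)) by (unfold c; field).
      rewrite exp_plus, exp_ln; [field; lra|lra]. }
    apply (unimodal_at_deriv_factor _ (fun y => v / (exp x * exp y))
      (fun u => A * u ^ 2)).
    + intro y; rewrite Hc; apply derivable_pt_lim_second.
    + intro y; pose proof (exp_pos y); apply Rdiv_lt_0_compat; nra.
    + intros u1 u2 H1 H12; apply Rmult_lt_compat_l; nra.
Qed.
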